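(* In the standing setting, if the step size satisfies $\eta\le\frac{1}{\kappa^2C_W}$, then for every $t\ge 0$ (with $f_1=0$), $\|f_{t+1}\|_K^2\le M^2C_W\,\eta\, t$ almost surely.
   Context: Standing setting: $\rho$ probability on $\mathcal X\times\mathcal Y$, $\mathcal Y\subseteq\mathbb R$, $|y|\le M$ a.s.; $K$ measurable symmetric positive semi-definite kernel with $\kappa=\sup_x\sqrt{K(x,x)}<\infty$, RKHS $\mathcal H_K$ with norm $\|\cdot\|_K$, $K_x=K(x,\cdot)$. $W:[0,\infty)\to\mathbb R$ with $W'_+(0)>0$, $W'(s)>0$ for $s>0$, $C_W:=\sup_{s>0}|W'(s)|<\infty$. Online algorithm: $z_t=(x_t,y_t)$ i.i.d. from $\rho$, $\sigma>0$, constant step size $\eta>0$, $f_1=0$, $f_{t+1}=f_t-\eta W'(\xi_{t,\sigma})(f_t(x_t)-y_t)K_{x_t}$, $\xi_{t,\sigma}=(y_t-f_t(x_t))^2/\sigma^2$. *)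

From HB Require Import structures.
From mathcomp Require Import all_boot all_order all_algebra.
From mathcomp Require Import all_classical all_reals all_analysis.
Set Implicit Arguments. Unset Strict Implicit. Unset Printing Implicit Defensive.
Import Order.TTheory GRing.Theory Num.Theory.
Import numFieldNormedType.Exports.
Local Open Scope classical_set_scope.
Local Open Scope ring_scope.

Section Defs.
Context {R : realType} {X : Type}.

(* A finite kernel expansion  sum_i a_i K_{u_i}, an element of
   span{K_x} inside H_K, stored as the list of pairs (a_i, u_i). *)
Definition kexp := seq (R * X).

Definition keval (K : X -> X -> R) (f : kexp) (x : X) : R :=
  \sum_(p <- f) p.1 * K p.2 x.

(* The squared RKHS norm of sum_i a_i K_{u_i}:
   ||f||_K^2 = <f,f>_K = sum_i sum_j a_i a_j K(u_i,u_j)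
   (reproducing property / definition of the inner product on span{K_x}). *)
Definition knorm2 (K : X -> X -> R) (f : kexp) : R :=
  \sum_(p <- f) \sum_(q <- f) p.1 * q.1 * K p.2 q.2.

Definition kernel_spsd (K : X -> X -> R) : Prop :=
  (forall x y, K x y = K y x) /\ (forall f : kexp, 0 <= knorm2 K f).

Definition kkappa (K : X -> X -> R) : R := sup (range (fun x => Num.sqrt (K x x))).

(* The online iterates on a fixed sample path z_1, z_2, ... given as
   z 0, z 1, ... (z n stands for z_{n+1}).  online n is f_{n+1}:
   f_1 = 0,
   f_{t+1} = f_t - eta W'(xi_{t,sigma}) (f_t(x_t) - y_t) K_{x_t}. *)
Fixpoint online (K : X -> X -> R) (Wp : R -> R) (sigma eta : R)
    (z : nat -> X * R) (n : nat) : kexp :=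
  match n with
  | 0 => [::]
  | m.+1 =>
    let f := online K Wp sigma eta z m in
    let x := (z m).1 in let y := (z m).2 in
    let r := keval K f x - y in
    let xi := (y - keval K f x) ^+ 2 / sigma ^+ 2 in
    f ++ [:: (- (eta * Wp xi * r), x)]
  end.

Definition CWconst (Wp : R -> R) : R := sup [set `|Wp s| | s in `]0, +oo[%classic].

End Defs.

Definition mutually_independent {R : realType} {d} {Omega : measurableType d}
  (P : probability Omega R) {dT} {T : measurableType dT} (Z : nat -> Omega -> T) : Prop :=
  forall (I : seq nat) (A : nat -> set T), uniq I ->
    (forall i, i \in I -> measurable (A i)) ->
    P (\big[setI/setT]_(i <- I) (Z i @^-1` A i)) =
    (\prod_(i <- I) P (Z i @^-1` A i))%E.

(* The bound is a pathwise (deterministic) statement about the online iterates,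
   transported to an almost-sure statement through the sampling law.

   Writing f_t for the iterate, r_t = f_t(x_t) - y_t and g_t = eta W'(xi_t) the
   effective step, one step appends the term -g_t r_t K_{x_t}, so by the
   reproducing property
     ||f_{t+1}||^2 = ||f_t||^2 - 2 g_t r_t f_t(x_t) + g_t^2 r_t^2 K(x_t,x_t).
   When g_t K(x_t,x_t) <= 1 (guaranteed by eta kappa^2 C_W <= 1 and
   0 < W' <= C_W) the last two terms are at most g_t (y_t^2 - f_t(x_t)^2)
   <= g_t y_t^2 <= eta C_W M^2, and induction on t gives the bound on every
   sample path with |y_n| <= M for n < t.  Since each z_n has law rho and
   |y| <= M rho-a.s., all samples are bounded simultaneously almost surely. *)
From HB Require Import structures.
From mathcomp Require Import all_boot all_order all_algebra.
From mathcomp Require Import all_classical all_reals all_analysis.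
From mathcomp Require Import ring lra.
Set Implicit Arguments. Unset Strict Implicit. Unset Printing Implicit Defensive.
Import Order.TTheory GRing.Theory Num.Theory.
Import numFieldNormedType.Exports.
Local Open Scope classical_set_scope.
Local Open Scope ring_scope.

Section KernelExpansions.
Context {R : realType} {X : Type} (K : X -> X -> R).

Lemma knorm2_cat1 (f : kexp) (c : R) (x : X) :
  (forall a b, K a b = K b a) ->
  knorm2 K (f ++ [:: (c, x)]) = knorm2 K f + 2 * c * keval K f x + c ^+ 2 * K x x.
Proof.
move=> Ksym; rewrite /knorm2 /keval big_cat big_seq1 /=.
under eq_bigr do rewrite big_cat big_seq1 /=.
rewrite big_split /= big_cat big_seq1 /=.
have -> : \sum_(p <- f) c * p.1 * K x p.2 = c * \sum_(p <- f) p.1 * K p.2 x.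
  by rewrite mulr_sumr; apply: eq_bigr => p _; rewrite Ksym mulrA.
have -> : \sum_(p <- f) p.1 * c * K p.2 x = c * \sum_(p <- f) p.1 * K p.2 x.
  by rewrite mulr_sumr; apply: eq_bigr => p _; rewrite mulrCA mulrA.
rewrite expr2; lra.
Qed.

(* The diagonal of a positive semi-definite kernel is nonnegative:
   K(x,x) = ||K_x||^2. *)
Lemma kdiag_ge0 (x : X) : (forall f : kexp, 0 <= knorm2 K f) -> 0 <= K x x.
Proof. by move/(_ [:: (1, x)]); rewrite /knorm2 !big_seq1 /= !mul1r. Qed.

Lemma kdiag_le_kappa2 (x : X) :
  (forall f : kexp, 0 <= knorm2 K f) ->
  has_ubound (range (fun x => Num.sqrt (K x x))) -> K x x <= kkappa K ^+ 2.
Proof.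
move=> Kpsd Kbd; have Kxx0 := kdiag_ge0 x Kpsd.
have sqrt_le : Num.sqrt (K x x) <= kkappa K by apply: (ub_le_sup Kbd); exists x.
rewrite -(sqr_sqrtr Kxx0) !expr2.
by apply: ler_pM => //; apply: sqrtr_ge0.
Qed.

End KernelExpansions.

Section WeightBound.
Context {R : realType} (Wp : R -> R).
Hypothesis Wp_bounded : has_ubound [set `|Wp s| | s in `]0, +oo[%classic].

Lemma normWp_le_CW (s : R) : 0 < s -> `|Wp s| <= CWconst Wp.
Proof.
move=> s_gt0; apply: (ub_le_sup Wp_bounded); exists s => //=.
by rewrite in_itv /= andbT.
Qed.

Lemma CW_ge0 : 0 <= CWconst Wp.
Proof. exact: le_trans (normr_ge0 (Wp 1)) (normWp_le_CW ltr01). Qed.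

End WeightBound.

(* One gradient step on the squared loss with effective step g, g K(x,x) <= 1:
   the increment of the squared norm is at most g y^2. *)
Lemma sq_loss_step_le (R : realFieldType) (g Kxx F y : R) :
  0 <= g -> 0 <= Kxx -> g * Kxx <= 1 ->
  2 * (- (g * (F - y))) * F + (- (g * (F - y))) ^+ 2 * Kxx <= g * y ^+ 2.
Proof.
move=> g_ge0 Kxx_ge0 gK_le1.
have quad_le : (- (g * (F - y))) ^+ 2 * Kxx <= g * (F - y) ^+ 2.
  have -> : (- (g * (F - y))) ^+ 2 * Kxx = g * (F - y) ^+ 2 * (g * Kxx).
    by rewrite !expr2; ring.
  by rewrite -[leRHS]mulr1; apply: ler_wpM2l => //; apply: mulr_ge0 => //; exact: sqr_ge0.
have gF2_ge0 : 0 <= g * F ^+ 2 by apply: mulr_ge0 => //; exact: sqr_ge0.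
have -> : g * y ^+ 2 = 2 * (- (g * (F - y))) * F + g * (F - y) ^+ 2 + g * F ^+ 2.
  by rewrite !expr2; ring.
lra.
Qed.

Lemma sqr_le_of_norm_le (R : realDomainType) (y M : R) : `|y| <= M -> y ^+ 2 <= M ^+ 2.
Proof.
move=> yM; rewrite -real_normK ?num_real //.
by apply: lerXn2r; rewrite ?nnegrE //; exact: le_trans yM.
Qed.

Section PathwiseBound.
Context {R : realType} {X : Type} (K : X -> X -> R) (Wp : R -> R).
Variables (sigma eta M : R).
Hypotheses (HK : kernel_spsd K)
  (Kbd : has_ubound (range (fun x => Num.sqrt (K x x))))
  (Wp_bounded : has_ubound [set `|Wp s| | s in `]0, +oo[%classic])
  (Wp_pos : forall s : R, 0 < s -> 0 < Wp s)
  (sigma_gt0 : 0 < sigma) (eta_gt0 : 0 < eta)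
  (step_small : eta * kkappa K ^+ 2 * CWconst Wp <= 1).

Definition online_coef (f : kexp) (x : X) (y : R) : R :=
  - (eta * Wp ((y - keval K f x) ^+ 2 / sigma ^+ 2) * (keval K f x - y)).

(* The increment of ||f||^2 in one online step on a sample with |y| <= M is
   at most M^2 C_W eta.  When the residual vanishes the step is zero;
   otherwise xi > 0, so 0 < W'(xi) <= C_W. *)
Lemma online_increment_le (f : kexp) (x : X) (y : R) : `|y| <= M ->
  2 * online_coef f x y * keval K f x + online_coef f x y ^+ 2 * K x x
    <= M ^+ 2 * CWconst Wp * eta.
Proof.
move: HK => [Ksym Kpsd] yM; rewrite /online_coef.
set r := keval K f x - y.
have Kxx_ge0 := kdiag_ge0 x Kpsd.
have CW_eta_ge0 : 0 <= M ^+ 2 * CWconst Wp * eta.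
  by rewrite mulr_ge0 ?(ltW eta_gt0) // mulr_ge0 ?sqr_ge0 // (CW_ge0 Wp_bounded).
have [r0|r_neq0] := eqVneq r 0.
  by rewrite r0 mulr0 oppr0 expr0n /= !(mulr0, mul0r) addr0.
set a := Wp _.
have xi_gt0 : 0 < (y - keval K f x) ^+ 2 / sigma ^+ 2.
  apply: divr_gt0; last exact: exprn_gt0.
  by rewrite -sqrrN opprB lt_neqAle sqr_ge0 andbT eq_sym sqrf_eq0.
have a_gt0 : 0 < a := Wp_pos xi_gt0.
have a_le_CW : a <= CWconst Wp.
  by apply: le_trans (normWp_le_CW Wp_bounded xi_gt0); exact: ler_norm.
have eta_a_ge0 : 0 <= eta * a by rewrite mulr_ge0 ?ltW.
have step_Kxx : eta * a * K x x <= 1.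
  apply: le_trans step_small.
  rewrite -[leLHS]mulrA -[leRHS]mulrA ler_pM2l // mulrC.
  by apply: ler_pM => //; [exact: ltW | exact: kdiag_le_kappa2].
apply: le_trans (sq_loss_step_le (keval K f x) y eta_a_ge0 Kxx_ge0 step_Kxx) _.
have -> : M ^+ 2 * CWconst Wp * eta = eta * CWconst Wp * M ^+ 2 by ring.
apply: ler_pM => //; first exact: sqr_ge0.
- by rewrite ler_pM2l.
- exact: sqr_le_of_norm_le.
Qed.

Lemma online_knorm2_le (zs : nat -> X * R) (t : nat) :
  (forall n, (n < t)%N -> `|(zs n).2| <= M) ->
  knorm2 K (online K Wp sigma eta zs t) <= M ^+ 2 * CWconst Wp * eta * t%:R.
Proof.
elim: t => [|t IH] zs_bd; first by rewrite /knorm2 big_nil mulr0.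
have IHt := IH (fun n n_lt => zs_bd n (ltnW n_lt)).
have incr := online_increment_le (online K Wp sigma eta zs t) (zs t).1 (zs_bd t (ltnSn t)).
rewrite /online_coef in incr; rewrite /= knorm2_cat1; last by case: HK.
by rewrite -[t.+1%:R]natr1 [leRHS]mulrDr mulr1; lra.
Qed.

End PathwiseBound.

Lemma ae_comp_law (R : realType) (dT : measure_display) (T : measurableType dT)
  (mu : {measure set T -> \bar R}) (dO : measure_display) (Omega : measurableType dO)
  (P : {measure set Omega -> \bar R}) (Z : Omega -> T) (Q : T -> Prop) :
  measurable_fun setT Z -> (forall A, measurable A -> P (Z @^-1` A) = mu A) ->
  {ae mu, forall x, Q x} -> {ae P, forall w, Q (Z w)}.
Proof.
move=> Zmeas Zlaw [N [mN muN0 notQ_sub]].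
exists (Z @^-1` N); split.
- by rewrite -[_ @^-1` _]setTI; exact: Zmeas.
- by rewrite Zlaw.
- by move=> w /= notQw; apply: notQ_sub.
Qed.

Theorem proposition2
  (R : realType)
  (* input space X (measurable), output space Y = R *)
  (dX : measure_display) (X : measurableType dX)
  (* rho : probability on X x Y with |y| <= M rho-a.s. *)
  (rho : probability (X * R)%type R) (M : R)
  (HM : {ae rho, forall zz : X * R, `|zz.2| <= M})
  (* measurable, symmetric, positive semi-definite kernel with kappa < oo *)
  (K : X -> X -> R)
  (HKmeas : measurable_fun setT (fun p : X * X => K p.1 p.2))
  (HK : kernel_spsd K)
  (Hkappa : has_ubound (range (fun x => Num.sqrt (K x x))))
  (* W : [0,oo) -> R with derivative Wp (right derivative at 0) *)
  (W Wp : R -> R)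
  (HWd : forall s : R, 0 < s -> is_derive s (1 : R) W (Wp s))
  (HW0 : (fun h : R => h^-1 * (W h - W 0)) @ (0:R)^'+ --> Wp 0)
  (HWp0 : 0 < Wp 0)
  (HWpos : forall s : R, 0 < s -> 0 < Wp s)
  (HCW : has_ubound [set `|Wp s| | s in `]0, +oo[%classic])
  (* the i.i.d. sample z_1, z_2, ... (z n stands for z_{n+1}) *)
  (dO : measure_display) (Omega : measurableType dO) (P : probability Omega R)
  (z : nat -> Omega -> X * R)
  (Hzmeas : forall n, measurable_fun setT (z n))
  (Hzdist : forall n (A : set (X * R)), measurable A -> P (z n @^-1` A) = rho A)
  (Hzindep : mutually_independent P z)
  (* parameters *)
  (sigma eta : R) (Hsigma : 0 < sigma) (Heta : 0 < eta)
  (Hstep : eta * kkappa K ^+ 2 * CWconst Wp <= 1) :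
  forall t : nat,
    {ae P, forall w : Omega,
      knorm2 K (online K Wp sigma eta (fun n => z n w) t)
        <= M ^+ 2 * CWconst Wp * eta * t%:R}.
Proof.
move=> t.
have labels_bd : {ae P, forall w, forall n, `|(z n w).2| <= M}.
  apply: ae_foralln => n.
  exact: (ae_comp_law (Q := fun zz : X * R => `|zz.2| <= M) (Hzmeas n) (Hzdist n) HM).
apply: filterS labels_bd => w labels_bd_w.
exact: (online_knorm2_le HK Hkappa HCW HWpos Hsigma Heta Hstep).
Qed.
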